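(* Let $G=(V,E)$ be a finite connected undirected graph with probability weights $w:E\to\mathbb{R}_{>0}$ and edge values $\omega:E\to\mathbb{R}$, let $r\in V$ be arbitrary, and let $T$ be a random spanning tree of $G$ with $\Pr(T)\propto\prod_{e\in E_T}w(e)$. Define $R(T)=\sum_{e\in E_T}\omega(e)$. Then $$\mathbb{E}[R(T)]=\operatorname{Tr}\Big[L_{G\times\omega}^{[r]}\big(L_G^{[r]}\big)^{-1}\Big],$$ $$\operatorname{Var}[R(T)]=\operatorname{Tr}\Big[\Big(L_{G\times\omega^2}^{[r]}-L_{G\times\omega}^{[r]}\big(L_G^{[r]}\big)^{-1}L_{G\times\omega}^{[r]}\Big)\big(L_G^{[r]}\big)^{-1}\Big].$$
   Context: For an edge weight function $c:E\to\mathbb{R}$, its Laplacian is $L=D-A$ with $A_{ij}=c(\{i,j\})$ (zero if $\{i,j\}\notin E$) and $D$ diagonal with $D_{ii}=\sum_jA_{ij}$. $L_G$, $L_{G\times\omega}$, $L_{G\times\omega^2}$ are the Laplacians for the edge weights $w(e)$, $w(e)\omega(e)$ and $w(e)\omega(e)^2$ respectively. For a matrix $M$ indexed by $V$, $M^{[r]}$ denotes $M$ with the row and column indexed by $r$ removed; $\operatorname{Tr}$ is the trace. *)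

From HB Require Import structures.
From mathcomp Require Import all_boot all_order all_algebra.
Set Implicit Arguments. Unset Strict Implicit. Unset Printing Implicit Defensive.
Import Order.TTheory GRing.Theory Num.Theory.
Local Open Scope ring_scope.

Section Graphs.
Variable V : finType.

(* A finite undirected graph is given by its edge set E : {set {set V}},
   every edge being a 2-element subset of V. *)
Definition simple_edges (E : {set {set V}}) : Prop :=
  forall e, e \in E -> #|e| = 2%N.

Definition adj (E : {set {set V}}) : rel V :=
  fun x y => (x != y) && ([set x; y] \in E).

Definition graph_connected (E : {set {set V}}) : Prop :=
  forall x y : V, connect (adj E) x y.

(* T is a spanning tree of (V,E): a subset of the edges which connects all
   vertices and has |V| - 1 edges (i.e. a connected acyclic spanning subgraph). *)
Definition spanning_tree (E T : {set {set V}}) : bool :=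
  [&& T \subset E, [forall x, forall y, connect (adj T) x y]
    & #|T| == #|V|.-1].

Variable R : realFieldType.

Definition tree_weight (w : {set V} -> R) (T : {set {set V}}) : R :=
  \prod_(e in T) w e.

Definition tree_Z (E : {set {set V}}) (w : {set V} -> R) : R :=
  \sum_(T : {set {set V}} | spanning_tree E T) tree_weight w T.

Definition tree_prob (E : {set {set V}}) (w : {set V} -> R) (T : {set {set V}}) : R :=
  tree_weight w T / tree_Z E w.

Definition Rval (om : {set V} -> R) (T : {set {set V}}) : R := \sum_(e in T) om e.

Definition expect (E : {set {set V}}) (w : {set V} -> R) (X : {set {set V}} -> R) : R :=
  \sum_(T : {set {set V}} | spanning_tree E T) tree_prob E w T * X T.

Definition variance (E : {set {set V}}) (w : {set V} -> R) (X : {set {set V}} -> R) : R :=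
  expect E w (fun T => (X T - expect E w X) ^+ 2).

End Graphs.

Section Laplacian.
Variables (R : realFieldType) (n : nat).
Local Notation V := 'I_n.+1.

Definition adjmx (E : {set {set V}}) (c : {set V} -> R) : 'M[R]_n.+1 :=
  \matrix_(i, j) (if adj E i j then c [set i; j] else 0).

Definition degmx (E : {set {set V}}) (c : {set V} -> R) : 'M[R]_n.+1 :=
  diag_mx (\row_i \sum_j adjmx E c i j).

Definition laplacian (E : {set {set V}}) (c : {set V} -> R) : 'M[R]_n.+1 :=
  degmx E c - adjmx E c.

Definition minor_rc (r : V) (M : 'M[R]_n.+1) : 'M[R]_n := row' r (col' r M).

End Laplacian.

From HB Require Import structures.
From mathcomp Require Import all_boot all_order all_algebra.
From mathcomp Require Import fingroup perm.
From mathcomp Require Import ring.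
Set Implicit Arguments. Unset Strict Implicit. Unset Printing Implicit Defensive.
Import Order.TTheory GRing.Theory Num.Theory.
Local Open Scope ring_scope.

(* Write the reduced Laplacian [L^[r](c)] for edge weights [c] as [B^T diag(c) B],
   where [B] is the signed incidence matrix with the column of [r] deleted.  Expanding
   the determinant multilinearly (Cauchy-Binet), and using that an [n x n] minor of
   [B] is [+-1] on the edge set of a spanning tree and [0] otherwise, gives the
   weighted matrix-tree theorem [det L^[r](c) = sum_T prod_(e in T) c e].
   For the weights [w (1 + t omega)] this identifies the generating polynomial
   [Z(t) = sum_T w(T) prod_(e in T) (1 + t omega e)] with [det (L + t L_omega)].  Its
   coefficients of [t] and [t^2] are [Z(0) E[R]] and [Z(0) E[R^2 - sum_(e in T) omega e^2] / 2],
   while Jacobi's formula [d det A = tr (adj A dA)] computes them as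
   [det L tr (L^-1 L_omega)] and [det L (tr (L^-1 L_omega)^2 - tr ((L^-1 L_omega)^2)) / 2].
   Applying the first identity to [omega^2] as well yields the variance. *)

(** * Determinants *)

Section DeterminantExpansion.
Variable R : comPzRingType.

Lemma det_expand_multilinear n (K : finType) (a b : K -> 'I_n -> R) :
  \det (\matrix_(i, j) \sum_k a k i * b k j) =
  \sum_(f : {ffun 'I_n -> K}) (\prod_i a (f i) i) * \det (\matrix_(i, j) b (f i) j).
Proof.
rewrite /determinant.
under eq_bigr => s _.
  rewrite (eq_bigr (fun i => \sum_k a k i * b k (s i))); last by move=> i _; rewrite mxE.
  rewrite bigA_distr_bigA big_distrr /=.
  over.
rewrite exchange_big /=; apply: eq_bigr => f _.
rewrite big_distrr /=; apply: eq_bigr => s _.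
rewrite big_split /= mulrCA; congr (_ * (_ * _)).
by apply: eq_bigr => i _; rewrite mxE.
Qed.

Lemma det_ranked_support n (M : 'M[R]_n) (s0 : 'S_n) (h : 'I_n -> nat) :
  (forall i j, M i j != 0 -> (h j <= h (s0 i) ?= iff (j == s0 i))%N) ->
  \det M = (-1) ^+ s0 * \prod_i M i (s0 i).
Proof.
move=> ranked; rewrite /determinant (bigD1 s0) //= [X in _ + X]big1 ?addr0 // => s ne_s.
have [i /eqP Mi0 | nzM] := pickP (fun i => M i (s i) == 0).
  by rewrite (bigD1 i) //= Mi0 mul0r mulr0.
have sum_h (t : 'S_n) : (\sum_i h (t i) = \sum_j h j)%N.
  by rewrite [RHS](reindex_inj (@perm_inj _ t)).
have := leqif_sum (P := predT) (fun i _ => ranked i (s i) (negbT (nzM i))).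
rewrite !sum_h => -[_]; rewrite eqxx => /esym/forallP eq_s.
by case/eqP: ne_s; apply/permP => i; apply/eqP/eq_s.
Qed.

End DeterminantExpansion.

Section JacobiFormula.
Variable R : comNzRingType.

Lemma deriv_prod_seq (I : eqType) (s : seq I) (F : I -> {poly R}) : uniq s ->
  (\prod_(j <- s) F j)^`() =
  \sum_(i <- s) \prod_(j <- s) (if j == i then (F j)^`() else F j).
Proof.
elim: s => [|a s IH] /=; first by rewrite !big_nil derivC.
case/andP => a_notin_s uniq_s.
rewrite big_cons derivM IH // big_cons big_cons eqxx; congr (_ * _ + _).
  rewrite big_seq_cond [RHS]big_seq_cond; apply: eq_bigr => j /andP[js _].
  by case: eqP js a_notin_s => // -> ->.
rewrite big_distrr /= big_seq_cond [RHS]big_seq_cond.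
apply: eq_bigr => i /andP[iS _]; rewrite big_cons.
by case: eqP iS a_notin_s => // <- ->.
Qed.

Lemma deriv_prod (I : finType) (F : I -> {poly R}) :
  (\prod_j F j)^`() = \sum_i \prod_j (if j == i then (F j)^`() else F j).
Proof. exact: deriv_prod_seq (index_enum_uniq I). Qed.

Lemma deriv_signr_mul (b : nat) (p : {poly R}) : ((-1) ^+ b * p)^`() = (-1) ^+ b * p^`().
Proof. by rewrite -signr_odd; case: (odd b); rewrite ?mul1r ?mulN1r ?derivN. Qed.

Lemma deriv_det n (A : 'M[{poly R}]_n) : (\det A)^`() = \tr (\adj A *m map_mx deriv A).
Proof.
rewrite /(\det A) linear_sum /=.
transitivity (\sum_i \det (\matrix_(j, k) if j == i then (A j k)^`() else A j k)).
  under eq_bigr => s _ do rewrite deriv_signr_mul deriv_prod big_distrr /=.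
  rewrite exchange_big /=; apply: eq_bigr => i _; apply: eq_bigr => s _.
  by congr (_ * _); apply: eq_bigr => j _; rewrite mxE; case: eqP.
rewrite mxtrace_mulC /mxtrace; apply: eq_bigr => i _.
rewrite (expand_det_row _ i) mxE; apply: eq_bigr => k _.
rewrite !mxE eqxx; congr (_ * _).
rewrite /cofactor; congr (_ * \det _); apply/matrixP => a b.
by rewrite !mxE eq_sym (negbTE (neq_lift _ _)).
Qed.

End JacobiFormula.

Section Pencil.
Variables (R : comNzRingType) (n : nat).
Local Notation ev0 := (horner_eval (0 : R)).

Lemma map_mx_derivM m p q (M : 'M[{poly R}]_(m, p)) (N : 'M_(p, q)) :
  map_mx deriv (M *m N) = map_mx deriv M *m N + M *m map_mx deriv N.
Proof.
apply/matrixP => i j; rewrite !mxE linear_sum -big_split /=.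
by apply: eq_bigr => k _; rewrite !mxE derivM.
Qed.

Lemma deriv_mxtrace (M : 'M[{poly R}]_n) : (\tr M)^`() = \tr (map_mx deriv M).
Proof. by rewrite /mxtrace linear_sum; apply: eq_bigr => i _; rewrite mxE. Qed.

Lemma horner0_mxtrace (M : 'M[{poly R}]_n) : (\tr M).[0] = \tr (map_mx ev0 M).
Proof. by rewrite /mxtrace horner_sum; apply: eq_bigr => i _; rewrite mxE. Qed.

Lemma map_mx_ev0_polyC m p (B : 'M[R]_(m, p)) : map_mx ev0 (map_mx polyC B) = B.
Proof. by apply/matrixP => i j; rewrite !mxE horner_evalE hornerC. Qed.

Definition pencil (L B : 'M[R]_n) : 'M[{poly R}]_n :=
  map_mx polyC L + 'X *: map_mx polyC B.

Lemma pencil_at0 L B : map_mx ev0 (pencil L B) = L.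
Proof.
apply/matrixP => i j.
by rewrite !mxE horner_evalE hornerD hornerC hornerM hornerX mul0r addr0.
Qed.

Lemma deriv_pencil L B : map_mx deriv (pencil L B) = map_mx polyC B.
Proof.
apply/matrixP => i j; rewrite !mxE derivD derivC derivM derivX derivC.
by rewrite mulr0 addr0 mul1r add0r.
Qed.

Lemma deriv_det_pencil L B :
  (\det (pencil L B))^`() = \tr (\adj (pencil L B) *m map_mx polyC B).
Proof. by rewrite deriv_det deriv_pencil. Qed.

Lemma coef1_det_pencil L B : (\det (pencil L B))`_1 = \tr (\adj L *m B).
Proof.
rewrite -[1%N]/(0.+1) -[_`_1]mulr1n -coef_deriv -horner_coef0 deriv_det_pencil.
by rewrite horner0_mxtrace map_mxM map_mx_adj pencil_at0 map_mx_ev0_polyC.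
Qed.

End Pencil.

Lemma coef2_det_pencil (F : fieldType) n (L B : 'M[F]_n) : L \in unitmx ->
  (\det (pencil L B))`_2 *+ 2 =
  \det L * (\tr (invmx L *m B) ^+ 2 - \tr (invmx L *m B *m invmx L *m B)).
Proof.
move=> L_unit; set P := pencil L B; set D := \det P.
pose ev0 := horner_eval (0 : F).
pose A1 := map_mx ev0 (map_mx deriv (\adj P)).
have adjL : \adj L = \det L *: invmx L.
  by rewrite /invmx L_unit scalerA divff ?scale1r // -unitfE -unitmxE.
have D2 : D`_2 *+ 2 = \tr (A1 *m B).
  have := coef_deriv D^`() 0; rewrite mulr1n [D^`()`_1]coef_deriv => <-.
  rewrite -horner_coef0 deriv_det_pencil deriv_mxtrace map_mx_derivM.
  have -> : map_mx deriv (map_mx polyC B) = 0 by apply/matrixP => i j; rewrite !mxE derivC.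
  by rewrite mulmx0 addr0 horner0_mxtrace map_mxM map_mx_ev0_polyC.
(* Differentiating [adj P * P = (det P)%:M] at 0 determines [A1], the derivative
   of the adjugate at 0. *)
have A1L : A1 *m L + \adj L *m B = (D`_1)%:M.
  have := congr1 (fun M => map_mx ev0 (map_mx deriv M)) (mul_adj_mx P).
  rewrite /= map_mx_derivM deriv_pencil map_mxD !map_mxM map_mx_adj pencil_at0.
  rewrite map_mx_ev0_polyC => ->; apply/matrixP => i j.
  by rewrite !mxE derivMn /ev0 horner_evalE hornerMn horner_coef0 coef_deriv mulr1n.
have A1E : A1 = ((D`_1)%:M - \adj L *m B) *m invmx L.
  by rewrite -A1L addrK -mulmxA mulmxV // mulmx1.
rewrite D2 A1E coef1_det_pencil adjL -scalemxAl mxtraceZ !mulmxBl mul_scalar_mx.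
rewrite -!scalemxAl linearB /= !mxtraceZ -!mulmxA mxtrace_mulC !mulmxA.
ring.
Qed.

Lemma low_coefs_prod_linear (R : comNzRingType) (I : Type) (s : seq I) (a b : I -> R) :
  let p := \prod_(x <- s) ((a x)%:P + 'X * (a x * b x)%:P) in
  [/\ p`_0 = \prod_(x <- s) a x, p`_1 = (\prod_(x <- s) a x) * \sum_(x <- s) b x &
   p`_2 *+ 2 = (\prod_(x <- s) a x) * ((\sum_(x <- s) b x) ^+ 2 - \sum_(x <- s) b x ^+ 2)].
Proof.
elim: s => [|x s [IH0 IH1 IH2]] /=.
  by rewrite !big_nil !coef1 /=; split; rewrite ?mulr0 ?expr0n /= ?subr0 ?mulr0 ?mul0rn.
rewrite !big_cons; set p := \prod_(j <- s) _ in IH0 IH1 IH2 *.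
have coefE k : (((a x)%:P + 'X * (a x * b x)%:P) * p)`_k =
    a x * p`_k + (if k == 0%N then 0 else a x * b x * p`_k.-1).
  by rewrite mulrDl coefD coefCM -mulrA coefXM coefCM.
rewrite !coefE /= IH0 IH1 addr0; split => //; first by ring.
by rewrite mulrnDl -mulrnAr IH2; ring.
Qed.

(** * Incidence matrices and spanning trees *)

Section Incidence.
Variable V : finType.

(* The orientation is arbitrary (fixed by [pick]): only products of two incidences
   of the same edge matter. *)
Definition incidence (e : {set V}) (x : V) : int :=
  if x \in e then (if [pick y in e] == Some x then 1 else -1) else 0.

Lemma incidence_notin (e : {set V}) x : x \notin e -> incidence e x = 0.
Proof. by rewrite /incidence => /negbTE ->. Qed.

Lemma set2_card2 (e : {set V}) x y :
  #|e| = 2%N -> x \in e -> y \in e -> x != y -> e = [set x; y].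
Proof.
move=> e2 xe ye xy; apply/eqP; rewrite eq_sym eqEcard cards2 xy e2 leqnn andbT.
by apply/subsetP => z; rewrite !inE => /orP[]/eqP->.
Qed.

Lemma incidenceP (e : {set V}) : #|e| = 2%N -> exists a b, [/\ a != b, e = [set a; b] &
  forall x, incidence e x = if x == a then 1 else if x == b then -1 else 0].
Proof.
move/eqP/cards2P => [x [y [xy De]]].
have oriented a b : a != b -> e = [set a; b] -> [pick z in e] = Some a ->
    forall z, incidence e z = if z == a then 1 else if z == b then -1 else 0.
  move=> ab Dab pick_a z; rewrite /incidence pick_a Dab !inE.
  have [->|za] := eqVneq z a; first by rewrite eqxx.
  by case: (z == b); rewrite // (inj_eq Some_inj) eq_sym (negbTE za).
case Dh: [pick z in e] => [h|]; last first.
  by move: Dh; case: pickP => // /(_ x); rewrite De !inE eqxx.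
have : h \in [set x; y] by rewrite -De; move: Dh; case: pickP => // ? ? [<-].
rewrite !inE => /orP[]/eqP Dx; rewrite Dx in Dh.
  by exists x, y; split; rewrite //; apply: oriented.
have Dyx : e = [set y; x] by rewrite De setUC.
by exists y, x; split; rewrite 1?eq_sym //; apply: oriented; rewrite 1?eq_sym.
Qed.

Lemma incidence_sqr (e : {set V}) x : #|e| = 2%N -> x \in e -> incidence e x ^+ 2 = 1.
Proof.
move=> /incidenceP [a [b [ab -> incE]]]; rewrite incE !inE.
by case: eqP => _ //=; case: eqP.
Qed.

Lemma incidence_mul_ends (e : {set V}) x y : #|e| = 2%N ->
  x \in e -> y \in e -> x != y -> incidence e x * incidence e y = -1.
Proof.
move=> /incidenceP [a [b [ab -> incE]]]; rewrite !incE !inE.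
case/orP=>/eqP->; case/orP=>/eqP->; rewrite ?eqxx //=.
all: by rewrite ?eqxx ?(negbTE ab) // eq_sym (negbTE ab).
Qed.

End Incidence.

Lemma adj_sym (V : finType) (T : {set {set V}}) : symmetric (adj T).
Proof. by move=> x y; rewrite /adj eq_sym setUC. Qed.

Section ParentEdges.
Variables (V : finType) (T : {set {set V}}) (r : V).
Hypothesis reach : forall x, connect (adj T) r x.

Definition bfs_ball k : {set V} :=
  iter k (fun B => B :|: [set y | [exists x in B, adj T x y]]) [set r].

Lemma bfs_ball_adj k x y : x \in bfs_ball k -> adj T x y -> y \in bfs_ball k.+1.
Proof.
move=> xk xy; rewrite /= inE; apply/orP; right; rewrite inE.
by apply/existsP; exists x; rewrite xk xy.
Qed.

Lemma bfs_ball_reach x : exists k, x \in bfs_ball k.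
Proof.
have /connectP [p p_path ->] := reach x.
exists (size p); elim/last_ind: p p_path => [|p y IH]; first by rewrite /= inE.
rewrite rcons_path last_rcons size_rcons => /andP[/IH p_ball p_y].
exact: bfs_ball_adj p_ball p_y.
Qed.

Definition depth x := ex_minn (bfs_ball_reach x).

Lemma depth_bfs_ball x : x \in bfs_ball (depth x).
Proof. by rewrite /depth; case: ex_minnP. Qed.

Lemma depth_min x k : x \in bfs_ball k -> (depth x <= k)%N.
Proof. by rewrite /depth; case: ex_minnP => m _ min_m /min_m. Qed.

Lemma exists_parent x : x != r -> exists u, adj T u x && (depth u < depth x)%N.
Proof.
move=> xr; have := depth_bfs_ball x; case Dx: (depth x) => [|k] /=.
  by rewrite inE (negbTE xr).
rewrite !inE => /orP[x_k | /existsP[u /andP[u_k ux]]].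
  by have := depth_min x_k; rewrite Dx ltnn.
by exists u; rewrite ux ltnS depth_min.
Qed.

Definition parent x := odflt r [pick u | adj T u x && (depth u < depth x)%N].

Lemma parentP x : x != r -> adj T (parent x) x && (depth (parent x) < depth x)%N.
Proof.
move=> xr; rewrite /parent; case: pickP => [u //|none].
by have [u] := exists_parent xr; rewrite none.
Qed.

Definition parent_edge x := [set x; parent x].

Lemma parent_edge_in x : x != r -> parent_edge x \in T.
Proof. by move/parentP/andP => [/andP[_ Tx] _]; rewrite /parent_edge setUC. Qed.

Lemma parent_edge_inj : {in [set~ r] &, injective parent_edge}.
Proof.
move=> x y; rewrite !inE => xr yr Exy.
have /andP[_ lt_y] := parentP yr; have /andP[_ lt_x] := parentP xr.
have : x \in parent_edge y by rewrite -Exy !inE eqxx.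
rewrite !inE => /orP[/eqP // | /eqP x_py].
have : y \in parent_edge x by rewrite Exy !inE eqxx.
rewrite !inE => /orP[/eqP // | /eqP y_px].
by move: lt_x lt_y; rewrite -x_py -y_px => /ltn_trans lt /lt; rewrite ltnn.
Qed.

Lemma connect_parent_edges x : connect (adj (parent_edge @: [set~ r])) r x.
Proof.
elim: {x}(depth x).+1 {-2}x (ltnSn (depth x)) => [//|k IH] x lt_x_k.
have [-> | xr] := eqVneq x r; first exact: connect0.
have /andP[/andP[ux _] lt_ux] := parentP xr.
apply: connect_trans (IH _ (leq_trans lt_ux lt_x_k)) (connect1 _).
by rewrite /adj ux setUC; apply/imsetP; exists x; rewrite ?inE.
Qed.

End ParentEdges.

Lemma spanning_tree_parent_edges (V : finType) (E : {set {set V}}) (r : V)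
    (conn : graph_connected E) :
  spanning_tree E (parent_edge (conn r) @: [set~ r]).
Proof.
set T0 := _ @: _.
have connT0 := connect_parent_edges (conn r).
apply/and3P; split.
- by apply/subsetP => e /imsetP[x]; rewrite !inE => xr ->; apply: parent_edge_in.
- apply/forallP => x; apply/forallP => y; apply: connect_trans (connT0 y).
  by rewrite (sym_connect_sym (@adj_sym V T0)).
- by rewrite card_in_imset ?cardsC1 //; apply: parent_edge_inj.
Qed.

Section IncidenceMatrix.
Variables (n : nat) (r : 'I_n.+1).
Local Notation V := 'I_n.+1.

Definition incidence_mx (f : {ffun 'I_n -> {set V}}) : 'M[int]_n :=
  \matrix_(i, j) incidence (f i) (lift r j).

Variable f : {ffun 'I_n -> {set V}}.
Hypothesis f2 : forall i, #|f i| = 2%N.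
Local Notation T := (f @: setT).

(* The indicator of a connected component avoiding [r] lies in the kernel. *)
Lemma det_incidence_mx_disconnected :
  ~~ [forall x, forall y, connect (adj T) x y] -> \det (incidence_mx f) = 0.
Proof.
move=> not_conn; have symT := sym_connect_sym (@adj_sym V T).
have [z r_z] : exists z, ~~ connect (adj T) r z.
  move/forallPn: not_conn => [x /forallPn [y not_xy]].
  case r_x: (connect (adj T) r x); last by exists x; rewrite r_x.
  exists y; apply: contra not_xy => r_y; apply: connect_trans r_y.
  by rewrite symT.
pose C := [set u | connect (adj T) z u].
have rC : r \notin C by rewrite inE symT.
apply/eqP; rewrite -(intr_eq0 rat) -det_map_mx -det_tr; apply/det0P.
exists (\row_j ((lift r j \in C)%:R : rat)).
  case: (unliftP r z) => [j0 Dz | Dz]; last by rewrite Dz connect0 in r_z.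
  apply/negP => /eqP/rowP/(_ j0); rewrite !mxE -Dz inE connect0 => /eqP.
  by rewrite oner_eq0.
apply/rowP => i; rewrite !mxE.
under eq_bigr do rewrite !mxE.
pose G x := ((x \in C)%:R : rat) * (incidence (f i) x)%:~R.
transitivity (\sum_x G x).
  by rewrite (bigD1_ord r) //= {1}/G (negbTE rC) mul0r add0r.
have [a [b [ab Dfi incE]]] := incidenceP (f2 i).
have adj_ab : adj T a b by rewrite /adj ab -Dfi imset_f ?inE.
have C_ab : (a \in C) = (b \in C) by rewrite !inE (same_connect1r symT adj_ab).
rewrite (bigD1 a) // (bigD1 b) 1?eq_sym //= big1 => [|x /andP[xb xa]].
  by rewrite /G !incE eqxx eq_sym (negbTE ab) eqxx C_ab addr0 mulrN1 mulr1 addrN.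
by rewrite /G incE (negbTE xa) (negbTE xb) mulr0.
Qed.

Hypotheses (f_inj : injective f) (T_conn : forall x y, connect (adj T) x y).
Let reach : forall x, connect (adj T) r x := T_conn r.
Local Notation pe := (parent_edge reach).
Local Notation d := (depth reach).

Lemma parent_edges_tree : pe @: [set~ r] = T.
Proof.
apply/eqP; rewrite eqEcard (card_in_imset (@parent_edge_inj _ _ _ reach)) cardsC1 card_ord.
rewrite card_imset // cardsT card_ord leqnn andbT.
by apply/subsetP => e /imsetP[x]; rewrite !inE => xr ->; apply: parent_edge_in.
Qed.

(* Every tree edge is the parent edge of its deeper endpoint, its [child]; the
   matching of edges with their children is then the only nonzero term of the
   Leibniz expansion of [det (incidence_mx f)]. *)
Definition child i := odflt r [pick x | (x != r) && (pe x == f i)].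

Lemma childP i : (child i != r) && (pe (child i) == f i).
Proof.
rewrite /child; case: pickP => [x //|none].
have : f i \in pe @: [set~ r] by rewrite parent_edges_tree imset_f ?inE.
case/imsetP => x; rewrite !inE => xr Dx.
by have := none x; rewrite xr Dx eqxx.
Qed.

Lemma child_deepest i x : x \in f i -> (d x <= d (child i) ?= iff (x == child i))%N.
Proof.
have /andP[cr /eqP <-] := childP i.
rewrite !inE => /orP[/eqP -> | /eqP ->]; first by split; rewrite ?eqxx.
have /andP[_ lt_pc] := parentP reach cr.
split; first exact: ltnW.
rewrite (ltn_eqF lt_pc); apply/esym/negbTE.
by apply: contraTneq lt_pc => ->; rewrite ltnn.
Qed.

Definition child_index i := odflt i (unlift r (child i)).

Lemma lift_child_index i : lift r (child_index i) = child i.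
Proof.
have /andP[cr _] := childP i.
by rewrite /child_index; case: unliftP => [j -> // | Dc]; rewrite Dc eqxx in cr.
Qed.

Lemma child_index_inj : injective child_index.
Proof.
move=> i i' Eii'; apply: f_inj.
have /andP[_ /eqP <-] := childP i; have /andP[_ /eqP <-] := childP i'.
by rewrite -!lift_child_index Eii'.
Qed.

Lemma det_incidence_mx_tree : \det (incidence_mx f) ^+ 2 = 1.
Proof.
pose s0 := perm child_index_inj.
have lift_s0 i : lift r (s0 i) = child i by rewrite permE lift_child_index.
rewrite (@det_ranked_support _ _ _ s0 (fun j => d (lift r j))) => [|i j].
  rewrite exprMn sqrr_sign mul1r -prodrXl big1 // => i _.
  rewrite mxE lift_s0 incidence_sqr //.
  by have /andP[_ /eqP <-] := childP i; rewrite !inE eqxx.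
rewrite mxE /= -(inj_eq (@lift_inj _ r)) lift_s0 => nz.
by apply: child_deepest; apply: contraNT nz => /incidence_notin ->.
Qed.

End IncidenceMatrix.

(** * The weighted matrix-tree theorem *)

Section MatrixTree.
Variables (n : nat) (r : 'I_n.+1) (E : {set {set 'I_n.+1}}).
Local Notation V := 'I_n.+1.
Local Notation edge_seq := {ffun 'I_n -> {set V}}.

(* The minor [L^[r]] of the Laplacian, written as [B^T diag(c) B] with [B] the
   signed incidence matrix of [E] with the column of [r] removed. *)
Definition reduced_laplacian (S : pzRingType) (c : {set V} -> S) : 'M[S]_n :=
  \matrix_(i, j) \sum_(e in E) c e * (incidence e (lift r i) * incidence e (lift r j))%:~R.

Definition spanning_tree_enum (f : edge_seq) := injectiveb f && spanning_tree E (f @: setT).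

Hypothesis sE : simple_edges E.

Lemma det_incidence_mx_sqr (f : edge_seq) : (forall i, f i \in E) ->
  \det (incidence_mx r f) ^+ 2 = (spanning_tree_enum f)%:R.
Proof.
move=> fE; have f2 i : #|f i| = 2%N := sE (fE i).
rewrite /spanning_tree_enum; have [/injectiveP f_inj | /injectivePn [i [j ij fij]]] /= :=
  boolP (injectiveb f); last first.
  by rewrite (determinant_alternate ij) ?expr0n // => k; rewrite !mxE fij.
have sub : (f @: setT) \subset E by apply/subsetP => e /imsetP[i _ ->]; apply: fE.
rewrite /spanning_tree sub card_imset // cardsT !card_ord eqxx andbT /=.
have [conn | not_conn] /= := boolP [forall x, forall y, connect (adj (f @: setT)) x y].
  by apply: det_incidence_mx_tree f2 f_inj _ => x y; move/forallP/(_ x)/forallP/(_ y): conn.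
by rewrite det_incidence_mx_disconnected // expr0n.
Qed.

Definition incidence_term (f : edge_seq) : int :=
  (\prod_i incidence (f i) (lift r i)) * \det (incidence_mx r f).

Definition ffun_perm (s : 'S_n) (f : edge_seq) : edge_seq := [ffun i => f (s i)].

Lemma ffun_perm_inj s : injective (ffun_perm s).
Proof.
move=> f g /ffunP fg; apply/ffunP => i; have := fg (s^-1 i)%g.
by rewrite !ffunE permKV.
Qed.

Lemma sum_incidence_term_perm f :
  \sum_(s : 'S_n) incidence_term (ffun_perm s f) = \det (incidence_mx r f) ^+ 2.
Proof.
have det_perm_f s : \det (incidence_mx r (ffun_perm s f)) = (-1) ^+ s * \det (incidence_mx r f).
  have -> : incidence_mx r (ffun_perm s f) = row_perm s (incidence_mx r f).
    by apply/matrixP => i j; rewrite !mxE ffunE.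
  by rewrite row_permE det_mulmx det_perm.
rewrite expr2 -{1}det_tr /(\det (incidence_mx r f)^T) big_distrl /=.
apply: eq_bigr => s _; rewrite /incidence_term det_perm_f mulrCA mulrA; congr (_ * _).
by congr (_ * _); apply: eq_bigr => i _; rewrite !mxE ffunE.
Qed.

Variables (S : idomainType) (c : {set V} -> S).
Local Notation cE := (fun e => if e \in E then c e else 0).

Lemma det_reduced_laplacian_expand : \det (reduced_laplacian c) =
  \sum_(f : edge_seq) (\prod_i cE (f i)) * (incidence_term f)%:~R.
Proof.
have -> : reduced_laplacian c = \matrix_(i, j) \sum_e
    (cE e * (incidence e (lift r i))%:~R) * (incidence e (lift r j))%:~R.
  apply/matrixP => i j; rewrite !mxE big_mkcond; apply: eq_bigr => e _.
  by case: ifP; rewrite ?mul0r // intrM mulrA.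
rewrite det_expand_multilinear; apply: eq_bigr => f _.
rewrite big_split /= -mulrA /incidence_term intrM rmorph_prod; congr (_ * (_ * _)).
by rewrite -det_map_mx; congr (\det _); apply/matrixP => i j; rewrite !mxE.
Qed.

(* Summing over the relabellings [ffun_perm s f] of [f] squares the determinant,
   at the cost of a factor [n`!]. *)
Lemma symmetrize_incidence_terms :
  n`!%:R * \sum_(f : edge_seq) (\prod_i cE (f i)) * (incidence_term f)%:~R =
  \sum_(f : edge_seq) (\prod_i cE (f i)) * (\det (incidence_mx r f) ^+ 2)%:~R.
Proof.
rewrite -card_Sn -sumr_const big_distrl /=.
under eq_bigr => s _ do rewrite mul1r (reindex_inj (@ffun_perm_inj s)) /=.
rewrite exchange_big /=; apply: eq_bigr => f _.
rewrite -sum_incidence_term_perm rmorph_sum big_distrr /=; apply: eq_bigr => s _.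
congr (_ * _); rewrite [RHS](reindex_inj (@perm_inj _ s)) /=.
by apply: eq_bigr => i _; rewrite ffunE.
Qed.

Lemma sum_det_incidence_sqr :
  \sum_(f : edge_seq) (\prod_i cE (f i)) * (\det (incidence_mx r f) ^+ 2)%:~R =
  \sum_(f : edge_seq | spanning_tree_enum f) \prod_i c (f i).
Proof.
rewrite [RHS]big_mkcond /=; apply: eq_bigr => f _.
have [/forallP fE | /forallPn [i fi]] := boolP [forall i, f i \in E].
  rewrite det_incidence_mx_sqr // (eq_bigr (fun i => c (f i))) => [|i _]; last by rewrite fE.
  by case: (spanning_tree_enum f); rewrite ?mulr1 ?mulr0.
have -> : spanning_tree_enum f = false.
  apply/negbTE; apply: contra fi => /andP[_ /andP[sub _]].
  by apply: (subsetP sub); rewrite imset_f ?inE.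
by rewrite (bigD1 i) //= (negbTE fi) !mul0r.
Qed.

Lemma card_tree_enums T : spanning_tree E T ->
  #|[pred f : edge_seq | spanning_tree_enum f && (f @: setT == T)]| = n`!.
Proof.
move=> stT; have cardT : #|T| = n by move: stT => /and3P[_ _ /eqP ->]; rewrite card_ord.
transitivity #|[set f : edge_seq in ffun_on (mem T) | injectiveb f]|;
  last by rewrite card_inj_ffuns_on card_ord cardT ffactnn.
apply: eq_card => f; rewrite !inE /spanning_tree_enum.
apply/idP/idP => [/andP[/andP[-> _] /eqP <-] | /andP[/ffun_onP fT inj]].
  by rewrite andbT; apply/ffun_onP => i; rewrite imset_f ?inE.
have imT : f @: setT = T.
  apply/eqP; rewrite eqEcard card_imset; last exact/injectiveP.
  rewrite cardsT card_ord cardT leqnn andbT.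
  by apply/subsetP => e /imsetP[i _ ->]; apply: fT.
by rewrite inj imT stT eqxx.
Qed.

Lemma sum_spanning_tree_enums :
  \sum_(f : edge_seq | spanning_tree_enum f) \prod_i c (f i) =
  n`!%:R * \sum_(T | spanning_tree E T) \prod_(e in T) c e.
Proof.
rewrite (partition_big (fun f : edge_seq => f @: setT) (spanning_tree E)) /=;
  last by move=> f /andP[].
rewrite big_distrr; apply: eq_bigr => T stT.
transitivity (\sum_(f : edge_seq | spanning_tree_enum f && (f @: setT == T)) \prod_(e in T) c e).
  apply: eq_bigr => f /andP[/andP[/injectiveP f_inj _] /eqP <-].
  rewrite big_imset /=; last by move=> x y _ _; apply: f_inj.
  by apply: eq_bigl => i; rewrite inE.
by rewrite sumr_const /= mulr_natl; congr (_ *+ _); apply: card_tree_enums.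
Qed.

Theorem matrix_tree : (n`!%:R : S) != 0 ->
  \det (reduced_laplacian c) = \sum_(T | spanning_tree E T) \prod_(e in T) c e.
Proof.
move=> nfact; apply: (mulfI nfact).
by rewrite det_reduced_laplacian_expand symmetrize_incidence_terms
  sum_det_incidence_sqr sum_spanning_tree_enums.
Qed.

End MatrixTree.

Section IncidenceGram.
Variables (V : finType) (E : {set {set V}}).
Hypothesis sE : simple_edges E.

Lemma sum_adj_edges (S : nmodType) (c : {set V} -> S) x :
  \sum_z (if adj E x z then c [set x; z] else 0) = \sum_(e in E | x \in e) c e.
Proof.
rewrite -big_mkcond /= -(big_imset c) /=; last first.
  move=> z1 z2 /andP[xz1 _] /andP[xz2 _] E12.
  have : z1 \in [set x; z2] by rewrite -E12 !inE eqxx orbT.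
  by rewrite !inE eq_sym (negbTE xz1) => /eqP.
apply: eq_bigl => e; apply/imsetP/andP => [[z] | [eE xe]].
  by move=> /andP[_ Ez] ->; rewrite Ez !inE eqxx.
have [a [b [ab De _]]] := incidenceP (sE eE).
have [z ze zx] : exists2 z, z \in e & z != x.
  move: xe; rewrite De !inE => /orP[]/eqP->; last by exists a; rewrite ?inE ?eqxx.
  by exists b; rewrite ?inE ?eqxx ?orbT // eq_sym.
have Dxz : e = [set x; z] by apply: set2_card2; rewrite ?sE // eq_sym.
by exists z; rewrite // unfold_in /= eq_sym zx -Dxz eE.
Qed.

Variable S : pzRingType.
Implicit Type c : {set V} -> S.

Lemma incidence_gram_diag c x :
  \sum_(e in E) c e * (incidence e x * incidence e x)%:~R = \sum_(e in E | x \in e) c e.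
Proof.
rewrite big_mkcondr /=; apply: eq_bigr => e eE.
have [xe | xe] := boolP (x \in e); last by rewrite incidence_notin // mul0r mulr0.
by rewrite -expr2 incidence_sqr ?sE // mulr1.
Qed.

Lemma incidence_gram_offdiag c x y : x != y ->
  \sum_(e in E) c e * (incidence e x * incidence e y)%:~R =
  - (if adj E x y then c [set x; y] else 0).
Proof.
move=> xy; have term0 e : e \in E -> e != [set x; y] ->
    c e * (incidence e x * incidence e y)%:~R = 0.
  move=> eE ne; have [xe | xe] := boolP (x \in e); last by rewrite incidence_notin // mul0r mulr0.
  have [ye | ye] := boolP (y \in e); last by rewrite [incidence e y]incidence_notin // !mulr0.
  by rewrite (set2_card2 (sE eE) xe ye xy) eqxx in ne.
rewrite /adj xy /=; case: ifPn => [Exy | nExy]; last first.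
  by rewrite oppr0 big1 // => e eE; apply: term0 => //; apply: contraNneq nExy => <-.
rewrite (bigD1 [set x; y]) //= big1 ?addr0 => [|e /andP[]]; last exact: term0.
by rewrite incidence_mul_ends ?sE // ?inE ?eqxx ?orbT // mulrN1.
Qed.

End IncidenceGram.

Section LaplacianMinor.
Variables (R : realFieldType) (n : nat) (r : 'I_n.+1) (E : {set {set 'I_n.+1}}).
Hypothesis sE : simple_edges E.

Lemma laplacian_incidence (c : {set 'I_n.+1} -> R) x y :
  laplacian E c x y = \sum_(e in E) c e * (incidence e x * incidence e y)%:~R.
Proof.
rewrite /laplacian /degmx /adjmx !mxE.
have [<- | xy] := eqVneq x y; last by rewrite mulr0n sub0r incidence_gram_offdiag.
rewrite mulr1n /adj eqxx subr0 incidence_gram_diag // -sum_adj_edges //.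
by apply: eq_bigr => z _; rewrite mxE.
Qed.

Lemma minor_laplacianE (c : {set 'I_n.+1} -> R) :
  minor_rc r (laplacian E c) = reduced_laplacian r E c.
Proof. by apply/matrixP => i j; rewrite /minor_rc [RHS]mxE 2![LHS]mxE laplacian_incidence. Qed.

End LaplacianMinor.

(** * Moments of the edge sum of a random spanning tree *)

Section TreeDistribution.
Variables (V : finType) (R : realFieldType) (E : {set {set V}}) (w : {set V} -> R).

Lemma tree_Z_gt0 : (forall e, e \in E -> 0 < w e) -> (exists T, spanning_tree E T) ->
  0 < tree_Z E w.
Proof.
move=> wpos [T stT]; have w_tree_gt0 T' : spanning_tree E T' -> 0 < tree_weight w T'.
  by case/and3P => /subsetP TE _ _; apply: prodr_gt0 => e /TE /wpos.
rewrite /tree_Z (bigD1 T) //= ltr_pwDl ?w_tree_gt0 ?sumr_ge0 // => T' /andP[stT' _].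
exact/ltW/w_tree_gt0.
Qed.

Lemma expect_ratio (X : {set {set V}} -> R) :
  expect E w X = (\sum_(T | spanning_tree E T) tree_weight w T * X T) / tree_Z E w.
Proof. by rewrite /expect big_distrl /=; apply: eq_bigr => T _; rewrite mulrAC. Qed.

Lemma variance_raw_moments (X : {set {set V}} -> R) : tree_Z E w != 0 ->
  variance E w X = expect E w (fun T => X T ^+ 2) - expect E w X ^+ 2.
Proof.
move=> Z0; rewrite /variance; set m := expect E w X.
have sum_prob : \sum_(T | spanning_tree E T) tree_prob E w T = 1.
  by rewrite /tree_prob -big_distrl /= divff.
transitivity (expect E w (fun T => X T ^+ 2) - m *+ 2 * m + m ^+ 2 * 1); last by ring.
rewrite -sum_prob /m {3}/expect !big_distrr /= -sumrB -big_split /=.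
by apply: eq_bigr => T _; ring.
Qed.

End TreeDistribution.

Section PencilOfLaplacians.
Variables (R : comNzRingType) (n : nat) (r : 'I_n.+1) (E : {set {set 'I_n.+1}}).

Lemma reduced_laplacian_pencil (a b : {set 'I_n.+1} -> R) :
  reduced_laplacian r E (fun e => (a e)%:P + 'X * (b e)%:P) =
  pencil (reduced_laplacian r E a) (reduced_laplacian r E b).
Proof.
apply/matrixP => i j; rewrite !mxE !rmorph_sum big_distrr -big_split /=.
by apply: eq_bigr => e _; rewrite !rmorphM rmorph_int /=; ring.
Qed.

End PencilOfLaplacians.

Lemma natr_fact_neq0 (R : numDomainType) n : (n`!%:R : R) != 0.
Proof. by rewrite pnatr_eq0 -lt0n fact_gt0. Qed.

Section TreeMoments.
Variables (R : realFieldType) (n : nat) (r : 'I_n.+1) (E : {set {set 'I_n.+1}}).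
Hypothesis sE : simple_edges E.
Variables (w g : {set 'I_n.+1} -> R).
Local Notation L := (reduced_laplacian r E w).
Local Notation Lg := (reduced_laplacian r E (fun e => w e * g e)).

Lemma tree_Z_det : tree_Z E w = \det L.
Proof. by rewrite matrix_tree ?natr_fact_neq0. Qed.

Lemma det_pencil_tree_sum :
  \det (pencil L Lg) =
  \sum_(T | spanning_tree E T) \prod_(e in T) ((w e)%:P + 'X * (w e * g e)%:P).
Proof.
rewrite -reduced_laplacian_pencil matrix_tree //.
by rewrite -polyC_natr polyC_eq0 natr_fact_neq0.
Qed.

Hypothesis L_unit : L \in unitmx.

Lemma tree_sum_first_moment :
  \sum_(T | spanning_tree E T) tree_weight w T * \sum_(e in T) g e =
  \det L * \tr (invmx L *m Lg).
Proof.
have adjL : \adj L = \det L *: invmx L.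
  by rewrite /invmx L_unit scalerA divff ?scale1r // -unitfE -unitmxE.
rewrite -mxtraceZ scalemxAl -adjL -coef1_det_pencil det_pencil_tree_sum coef_sum.
apply: eq_bigr => T _; have [_ coef1 _] := low_coefs_prod_linear (enum T) w g.
by rewrite !big_enum in coef1; rewrite coef1.
Qed.

Lemma tree_sum_second_moment :
  \sum_(T | spanning_tree E T) tree_weight w T *
    ((\sum_(e in T) g e) ^+ 2 - \sum_(e in T) g e ^+ 2) =
  \det L * (\tr (invmx L *m Lg) ^+ 2 - \tr (invmx L *m Lg *m invmx L *m Lg)).
Proof.
rewrite -coef2_det_pencil // det_pencil_tree_sum coef_sum -sumrMnl.
apply: eq_bigr => T _; have [_ _ coef2] := low_coefs_prod_linear (enum T) w g.
by rewrite !big_enum in coef2; rewrite coef2.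
Qed.

End TreeMoments.

Lemma det_reduced_laplacian_gt0 (R : realFieldType) n (r : 'I_n.+1)
    (E : {set {set 'I_n.+1}}) (w : {set 'I_n.+1} -> R) :
  simple_edges E -> graph_connected E -> (forall e, e \in E -> 0 < w e) ->
  0 < \det (reduced_laplacian r E w).
Proof.
move=> sE conn wpos; rewrite -tree_Z_det // tree_Z_gt0 //.
by exists (parent_edge (conn r) @: [set~ r]); apply: spanning_tree_parent_edges.
Qed.

Section TreeExpectations.
Variables (R : realFieldType) (n : nat) (r : 'I_n.+1) (E : {set {set 'I_n.+1}}).
Hypothesis sE : simple_edges E.
Variables (w g : {set 'I_n.+1} -> R).
Local Notation L := (reduced_laplacian r E w).
Local Notation Lg := (reduced_laplacian r E (fun e => w e * g e)).
Local Notation Lg2 := (reduced_laplacian r E (fun e => w e * g e ^+ 2)).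
Hypothesis det_L_neq0 : \det L != 0.

Let L_unit : L \in unitmx. Proof. by rewrite unitmxE unitfE. Qed.

Lemma expect_Rval : expect E w (Rval g) = \tr (invmx L *m Lg).
Proof.
rewrite expect_ratio (tree_Z_det r sE) (tree_sum_first_moment sE g L_unit) mulrC.
by rewrite mulKf.
Qed.

Lemma expect_Rval_sqr : expect E w (fun T => Rval g T ^+ 2) =
  \tr (invmx L *m Lg) ^+ 2 - \tr (invmx L *m Lg *m invmx L *m Lg) + \tr (invmx L *m Lg2).
Proof.
rewrite expect_ratio (tree_Z_det r sE) -(mulKf det_L_neq0 (_ + _)) mulrDr.
rewrite -(tree_sum_second_moment sE g L_unit) -(tree_sum_first_moment sE (fun e => g e ^+ 2) L_unit).
rewrite -big_split mulrC; congr (_ * _).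
by apply: eq_bigr => T _ /=; rewrite /Rval; ring.
Qed.

End TreeExpectations.

Theorem corollary2 (R : realFieldType) (n : nat)
    (E : {set {set 'I_n.+1}}) (w om : {set 'I_n.+1} -> R) (r : 'I_n.+1) :
  simple_edges E ->
  graph_connected E ->
  (forall e, e \in E -> 0 < w e) ->
  let L := minor_rc r (laplacian E w) in
  let Lw := minor_rc r (laplacian E (fun e => w e * om e)) in
  let Lw2 := minor_rc r (laplacian E (fun e => w e * om e ^+ 2)) in
  expect E w (Rval om) = \tr (Lw *m invmx L) /\
  variance E w (Rval om) = \tr ((Lw2 - Lw *m invmx L *m Lw) *m invmx L).
Proof.
move=> sE conn wpos; rewrite /= !minor_laplacianE //.
have det_L_neq0 := lt0r_neq0 (det_reduced_laplacian_gt0 r sE conn wpos).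
split; first by rewrite (expect_Rval sE om det_L_neq0) mxtrace_mulC.
rewrite variance_raw_moments; last by rewrite (tree_Z_det r).
rewrite (expect_Rval sE om det_L_neq0) (expect_Rval_sqr sE om det_L_neq0).
by rewrite mulmxBl linearB /= !(mxtrace_mulC _ (invmx _)) !mulmxA; ring.
Qed.
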